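(* Let $p\ge1$, let $y_1,y_2\in\mathbb{R}^p$ with $d=\|y_1-y_2\|_2$ and $\bar y=\frac12(y_1+y_2)$. Let $\delta>0$ and $\lambda>0$, and let $\rho$ be the minimax concave penalty $$\rho(t)=\Bigl(t-\frac{t^2}{2\lambda\delta}\Bigr)I(t<\lambda\delta)+\frac{\lambda\delta}{2}I(t\ge\lambda\delta),\qquad t\ge 0.$$ If $\lambda\ge(1+\frac1\delta)\,d$, then the global minimizer over $(\theta_1,\theta_2)\in\mathbb{R}^p\times\mathbb{R}^p$ of $$\ell(\theta_1,\theta_2)=\|y_1-\theta_1\|_2^2+\|y_2-\theta_2\|_2^2+\lambda\rho(\|\theta_1-\theta_2\|_2)$$ is $(\hat\theta_1,\hat\theta_2)=(\bar y,\bar y)$.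
   Context: $I(\cdot)$ denotes the indicator function. *)

From HB Require Import structures.
From mathcomp Require Import all_boot all_order all_algebra.
Set Implicit Arguments. Unset Strict Implicit. Unset Printing Implicit Defensive.
Import Order.TTheory GRing.Theory Num.Theory.
Local Open Scope ring_scope.

Definition norm2 (R : rcfType) (p : nat) (v : 'rV[R]_p) : R :=
  Num.sqrt (\sum_(i < p) v 0 i ^+ 2).

Definition mcp (R : rcfType) (delta lambda t : R) : R :=
  (if t < lambda * delta then t - t ^+ 2 / (2 * lambda * delta) else 0)
  + (if lambda * delta <= t then lambda * delta / 2 else 0).

Definition loss (R : rcfType) (p : nat) (delta lambda : R)
  (y1 y2 th1 th2 : 'rV[R]_p) : R :=
  norm2 (y1 - th1) ^+ 2 + norm2 (y2 - th2) ^+ 2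
  + lambda * mcp delta lambda (norm2 (th1 - th2)).

From HB Require Import structures.
From mathcomp Require Import all_boot all_order all_algebra.
From mathcomp Require Import ring lra.
Import Order.TTheory GRing.Theory Num.Theory.
Local Open Scope ring_scope.
Set Implicit Arguments. Unset Strict Implicit.

(* With e = y1 - y2, s = (s1 + s2)/2 and u = s1 - s2, the parallelogram law
   and Cauchy-Schwarz give
     l(s1, s2) >= |e|^2/2 + 2 |ybar - s|^2 + g(|u|),
     g(t) = t^2/2 - |e| t + lambda rho(t),
   with equality at (ybar, ybar), where the right-hand side is |e|^2/2.
   The condition lambda >= (1 + 1/delta) |e| makes g(t) > 0 for every t > 0,
   so the minimum is attained exactly when s = ybar and u = 0. *)

Section EuclideanRowVectors.
Variables (R : rcfType) (p : nat).
Implicit Types (u v : 'rV[R]_p).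

Definition sqnorm v := \sum_(i < p) v 0 i ^+ 2.
Definition dotr u v := \sum_(i < p) u 0 i * v 0 i.

Lemma sqnorm_ge0 v : 0 <= sqnorm v.
Proof. by apply: sumr_ge0 => i _; rewrite sqr_ge0. Qed.

Lemma sqnorm_eq0 v : sqnorm v = 0 -> v = 0.
Proof.
move=> /eqP; rewrite psumr_eq0 => [/allP v0|i _]; last exact: sqr_ge0.
apply/rowP => i; rewrite mxE.
by have /= := v0 i (mem_index_enum _); rewrite sqrf_eq0 => /eqP.
Qed.

Lemma sqnorm0 : sqnorm 0 = 0.
Proof. by rewrite /sqnorm big1 // => i _; rewrite mxE expr0n. Qed.

Lemma norm2_ge0 v : 0 <= norm2 v.
Proof. exact: sqrtr_ge0. Qed.

Lemma norm2_sqr v : norm2 v ^+ 2 = sqnorm v.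
Proof. by rewrite /norm2 sqr_sqrtr // sqnorm_ge0. Qed.

Lemma norm2_eq0 v : norm2 v = 0 -> v = 0.
Proof. by move=> v0; apply: sqnorm_eq0; rewrite -norm2_sqr v0 expr0n. Qed.

Lemma norm20 : norm2 (0 : 'rV[R]_p) = 0.
Proof. by rewrite /norm2 -/(sqnorm 0) sqnorm0 sqrtr0. Qed.

Lemma dotrC u v : dotr u v = dotr v u.
Proof. by apply: eq_bigr => i _; rewrite mulrC. Qed.

Lemma dot0r v : dotr 0 v = 0.
Proof. by rewrite /dotr big1 // => i _; rewrite mxE mul0r. Qed.

Lemma sqnorm_lincomb (a b : R) u v :
  sqnorm (a *: u + b *: v) =
  a ^+ 2 * sqnorm u + 2 * a * b * dotr u v + b ^+ 2 * sqnorm v.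
Proof.
rewrite /sqnorm /dotr !mulr_sumr -!big_split.
by apply: eq_bigr => i _; rewrite /= !mxE; ring.
Qed.

Lemma sqnormB u v : sqnorm (u - v) = sqnorm u - 2 * dotr u v + sqnorm v.
Proof.
have -> : u - v = 1 *: u + (-1) *: v by rewrite scaleN1r scale1r.
by rewrite sqnorm_lincomb; ring.
Qed.

Lemma dotr_cauchy_schwarz u v : dotr u v <= norm2 u * norm2 v.
Proof.
wlog u0 : u v / norm2 u != 0.
  move=> cs; have [u0|] := eqVneq (norm2 u) 0; last exact: cs.
  by rewrite (norm2_eq0 u0) dot0r norm20 mul0r.
wlog v0 : u v u0 / norm2 v != 0.
  move=> cs; have [v0|] := eqVneq (norm2 v) 0; last exact: cs.
  by rewrite dotrC (norm2_eq0 v0) dot0r norm20 mulr0.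
have uv_gt0 : 0 < norm2 u * norm2 v by rewrite mulr_gt0 // lt0r ?u0 ?v0 norm2_ge0.
have := sqnorm_ge0 (norm2 v *: u + (- norm2 u) *: v).
rewrite sqnorm_lincomb -!norm2_sqr; nra.
Qed.

Lemma scale_half_double v : 2^-1 *: (v + v) = v.
Proof. by apply/rowP => i; rewrite !mxE; field. Qed.

Lemma sqnorm_parallelogram (y1 y2 s1 s2 : 'rV[R]_p) :
  sqnorm (y1 - s1) + sqnorm (y2 - s2) =
  2 * sqnorm (2^-1 *: (y1 + y2) - 2^-1 *: (s1 + s2))
  + sqnorm ((y1 - y2) - (s1 - s2)) / 2.
Proof.
rewrite /sqnorm mulr_sumr mulr_suml -!big_split.
by apply: eq_bigr => i _; rewrite /= !mxE; field.
Qed.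

End EuclideanRowVectors.

Section MinimaxConcavePenalty.
Variables (R : rcfType) (delta lambda : R).

Lemma mcp0 : 0 < lambda * delta -> mcp delta lambda 0 = 0.
Proof. by move=> ld_gt0; rewrite /mcp ld_gt0 leNgt ld_gt0 expr0n /= mul0r subr0 addr0. Qed.

Lemma mcp_threshold_mulr (d : R) : 0 < delta ->
  (1 + delta^-1) * d <= lambda -> (delta + 1) * d <= lambda * delta.
Proof.
move=> delta_gt0 hlam; have <- : (1 + delta^-1) * d * delta = (delta + 1) * d.
  by field; rewrite gt_eqF.
by have := ler_wpM2r (ltW delta_gt0) hlam.
Qed.

Lemma lt_lambda_of_threshold (d : R) : 0 < delta -> 0 < lambda -> 0 <= d ->
  (delta + 1) * d <= lambda * delta -> d < lambda.
Proof. by move=> *; nra. Qed.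

Definition mcp_gap (d t : R) := t ^+ 2 / 2 - d * t + lambda * mcp delta lambda t.

Lemma mcp_gap0 (d : R) : 0 < lambda * delta -> mcp_gap d 0 = 0.
Proof. by move=> ld_gt0; rewrite /mcp_gap mcp0 // expr0n /= mul0r !mulr0 subr0 addr0. Qed.

Lemma mcp_gap_gt0 (d t : R) : 0 < delta -> 0 < lambda -> 0 <= d ->
  (delta + 1) * d <= lambda * delta -> 0 < t -> 0 < mcp_gap d t.
Proof.
move=> delta_gt0 lambda_gt0 d_ge0 hld t_gt0.
have d_lt_lambda := lt_lambda_of_threshold delta_gt0 lambda_gt0 d_ge0 hld.
rewrite /mcp_gap /mcp; case: (ltP t (lambda * delta)) => t_lt.
- rewrite addr0.
  have -> : t ^+ 2 / 2 - d * t + lambda * (t - t ^+ 2 / (2 * lambda * delta))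
     = t * (2 * delta * (lambda - d) + t * (delta - 1)) / (2 * delta).
    by field; rewrite ?gt_eqF.
  rewrite divr_gt0 ?mulr_gt0 //.
  have [delta_ge1|delta_lt1] := leP 1 delta.
  + have : 0 < delta * (lambda - d) by rewrite mulr_gt0 // subr_gt0.
    have : 0 <= t * (delta - 1) by rewrite mulr_ge0 ?subr_ge0 // ltW.
    lra.
  + have : 0 <= d * (1 - delta) by rewrite mulr_ge0 // subr_ge0 ltW.
    have := mulr_gt0 delta_gt0 t_gt0; lra.
- rewrite add0r.
  have d_lt_t : d < t by nra.
  (* 2 * mcp_gap d t = (t - d)^2 + (lambda^2 delta - d^2) *)
  have : 0 < (t - d) ^+ 2 by rewrite exprn_gt0 // subr_gt0.
  have : 0 <= d * (lambda - d) by rewrite mulr_ge0 // subr_ge0 ltW.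
  nra.
Qed.

Lemma mcp_gap_ge0 (d t : R) : 0 < delta -> 0 < lambda -> 0 <= d ->
  (delta + 1) * d <= lambda * delta -> 0 <= t -> 0 <= mcp_gap d t.
Proof.
move=> delta_gt0 lambda_gt0 d_ge0 hld; rewrite le0r => /predU1P [->|t_gt0].
  by rewrite mcp_gap0 // mulr_gt0.
exact/ltW/mcp_gap_gt0.
Qed.

Section Loss.
Variables (p : nat) (y1 y2 : 'rV[R]_p).
Hypothesis ld_gt0 : 0 < lambda * delta.
Local Notation ybar := (2^-1 *: (y1 + y2)).
Local Notation l := (loss delta lambda y1 y2).

Lemma loss_mean : l ybar ybar = sqnorm (y1 - y2) / 2.
Proof.
rewrite /loss !norm2_sqr sqnorm_parallelogram scale_half_double.
by rewrite !subrr subr0 sqnorm0 norm20 mcp0 // !mulr0 add0r addr0.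
Qed.

Lemma loss_lower_bound s1 s2 :
  l ybar ybar + 2 * sqnorm (ybar - 2^-1 *: (s1 + s2))
  + mcp_gap (norm2 (y1 - y2)) (norm2 (s1 - s2)) <= l s1 s2.
Proof.
rewrite loss_mean /loss !norm2_sqr sqnorm_parallelogram (sqnormB (y1 - y2)) /mcp_gap.
have := dotr_cauchy_schwarz (y1 - y2) (s1 - s2).
have := norm2_sqr (s1 - s2).
lra.
Qed.

End Loss.
End MinimaxConcavePenalty.

Theorem lemma2 (R : rcfType) (p : nat) (hp : (1 <= p)%N)
  (y1 y2 : 'rV[R]_p) (delta lambda : R)
  (hdelta : 0 < delta) (hlambda : 0 < lambda)
  (hlam : (1 + delta^-1) * norm2 (y1 - y2) <= lambda) :
  forall t1 t2 : 'rV[R]_p,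
    (forall s1 s2 : 'rV[R]_p,
        loss delta lambda y1 y2 t1 t2 <= loss delta lambda y1 y2 s1 s2)
    <-> (t1 = 2^-1 *: (y1 + y2) /\ t2 = 2^-1 *: (y1 + y2)).
Proof.
set ybar := 2^-1 *: (y1 + y2) => t1 t2.
have ld_gt0 : 0 < lambda * delta by rewrite mulr_gt0.
have hld := mcp_threshold_mulr hdelta hlam.
have gap_ge0 (s1 s2 : 'rV[R]_p) := mcp_gap_ge0 hdelta hlambda (norm2_ge0 (y1 - y2)) hld
  (norm2_ge0 (s1 - s2)).
have mean_ge0 (s1 s2 : 'rV[R]_p) := sqnorm_ge0 (ybar - 2^-1 *: (s1 + s2)).
have lower_bound := loss_lower_bound y1 y2 ld_gt0.
split=> [t_min | [-> ->] s1 s2].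
- have := lower_bound t1 t2; have := t_min ybar ybar.
  have := gap_ge0 t1 t2; have := mean_ge0 t1 t2 => ? ? ? ?.
  have mean_eq0 : sqnorm (ybar - 2^-1 *: (t1 + t2)) = 0 by lra.
  have : ~ 0 < mcp_gap delta lambda (norm2 (y1 - y2)) (norm2 (t1 - t2)) by lra.
  move/(contra_not (mcp_gap_gt0 hdelta hlambda (norm2_ge0 _) hld)).
  rewrite lt0r norm2_ge0 andbT => /negP/negPn/eqP/norm2_eq0/subr0_eq t12.
  by move/sqnorm_eq0/subr0_eq: mean_eq0; rewrite t12 scale_half_double => <-.
- apply: le_trans (lower_bound s1 s2).
  by have := gap_ge0 s1 s2; have := mean_ge0 s1 s2; lra.
Qed.
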